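(* Let $\mathcal X=\mathcal X_1\times\cdots\times\mathcal X_b$, $\mathcal X_i=\mathbb R^{m_i\times n_i}$ with trace inner product and norms $\|\cdot\|_{(i)}$ (dual $\|\cdot\|_{(i)\star}$), $f$ continuously differentiable with $f\ge f^\star$, $\mathcal D$ a distribution on subsets of $[b]$, and assume constants $L^0_{i,S},L^1_{i,S}\ge0$ exist such that for all $S\in\operatorname{supp}(\mathcal D)$, $X\in\mathcal X$ and $\Gamma$ with $\Gamma_i=0$ for $i\notin S$: $f(X+\Gamma)-f(X)-\langle\nabla f(X),\Gamma\rangle\le\sum_{i\in S}\frac{L^0_{i,S}+L^1_{i,S}\|\nabla_if(X)\|_{(i)\star}}2\|\Gamma_i\|_{(i)}^2$. Let $S\in\operatorname{supp}(\mathcal D)$. Then for any $x_i>0$, $i\in[b]$, and all $X\in\mathcal X$, $$\sum_{i\in S}x_i\|\nabla_if(X)\|_{(i)\star}\le4\max_{i\in S}(x_iL^1_{i,S})\,(f(X)-f^\star)+\sum_{i\in S}\frac{x_iL^0_{i,S}}{L^1_{i,S}}.$$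
   Context: $\operatorname{supp}(\mathcal D)$ is the set of subsets of $[b]$ with positive probability under $\mathcal D$. *)

From HB Require Import structures.
From mathcomp Require Import all_boot all_order all_algebra.
From mathcomp Require Import classical_sets reals.
Set Implicit Arguments. Unset Strict Implicit. Unset Printing Implicit Defensive.
Import Order.TTheory GRing.Theory Num.Theory.
Local Open Scope ring_scope.

Definition blocks (R : realType) (b : nat) (m n : 'I_b -> nat) :=
  forall i : 'I_b, 'M[R]_(m i, n i).

Section Blocks.
Variables (R : realType) (b : nat) (m n : 'I_b -> nat).
Local Notation X := (blocks R m n).

Definition badd (A B : X) : X := fun i => A i + B i.
Definition bsub (A B : X) : X := fun i => A i - B i.

Definition mxinner (p q : nat) (A B : 'M[R]_(p, q)) : R := \tr (A^T *m B).

Definition binner (A B : X) : R := \sum_(i < b) mxinner (A i) (B i).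

(* an auxiliary reference norm on X (entrywise l1); used only to express
   differentiability / continuity (all norms on X are equivalent). *)
Definition bl1 (A : X) : R :=
  \sum_(i < b) \sum_(j < m i) \sum_(k < n i) `|A i j k|.

Definition has_gradient (f : X -> R) (g : X -> X) : Prop :=
  forall x : X, forall eps : R, 0 < eps -> exists2 delta : R, 0 < delta &
    forall h : X, bl1 h < delta ->
      `|f (badd x h) - f x - binner (g x) h| <= eps * bl1 h.

Definition bcontinuous (g : X -> X) : Prop :=
  forall x : X, forall eps : R, 0 < eps -> exists2 delta : R, 0 < delta &
    forall y : X, bl1 (bsub y x) < delta -> bl1 (bsub (g y) (g x)) < eps.

Definition C1_with_gradient (f : X -> R) (g : X -> X) : Prop :=
  has_gradient f g /\ bcontinuous g.
End Blocks.

Definition is_norm (R : realType) (p q : nat) (N : 'M[R]_(p, q) -> R) : Prop :=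
  [/\ forall A, 0 <= N A,
      forall A, N A = 0 -> A = 0,
      forall (c : R) A, N (c *: A) = `|c| * N A &
      forall A B, N (A + B) <= N A + N B].

Definition dual_norm (R : realType) (p q : nat) (N : 'M[R]_(p, q) -> R)
  (G : 'M[R]_(p, q)) : R :=
  sup [set r : R | exists D : 'M[R]_(p, q), N D <= 1 /\ r = mxinner G D].

Definition is_distribution (R : realType) (b : nat) (D : {set 'I_b} -> R) : Prop :=
  (forall S, 0 <= D S) /\ \sum_(S : {set 'I_b}) D S = 1.

Definition in_supp (R : realType) (b : nat) (D : {set 'I_b} -> R) (S : {set 'I_b}) : Prop :=
  0 < D S.

From mathcomp Require Import all_boot all_order all_algebra.
From mathcomp Require Import classical_sets reals boolp ring lra.
Import Order.TTheory GRing.Theory Num.Theory.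
Local Open Scope ring_scope.

(* Move every block i of S by G_i = - y_i V_i, where y_i = x_i / (2 M), M = max_(i in S) x_i L1_i,
   and V_i is a unit-ball direction with <grad_i f X, V_i> >= 3/4 ||grad_i f X||_*.  Since
   y_i L1_i <= 1/2, the curvature term of block i costs at most y_i/4 (||grad_i f X||_* + L0_i/L1_i)
   against a linear decrease of at least 3/4 y_i ||grad_i f X||_*, so f* <= f (X + G) yields
   f* - f X <= (B / 2 - A) / (4 M), with A and B the two sums of the claim.  Only 3/4 of the
   dual norm is asked of V_i because the supremum defining it need not be attained. *)

Lemma block_descent_le (R : realFieldType) (y L0 L1 nu a d : R) :
  0 < y -> 0 <= L0 -> 0 < L1 -> 2 * y * L1 <= 1 -> 0 <= nu <= 1 ->
  0 <= d -> 3/4 * d <= a ->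
  (L0 + L1 * d) / 2 * (y * nu) ^+ 2 - y * a <= y / 4 * (L0 / L1) - y / 2 * d.
Proof.
move=> y_gt0 L0_ge0 L1_gt0 yL1_le /andP[nu_ge0 nu_le1] d_ge0 a_ge.
have [y_ge0 L1_ge0] := (ltW y_gt0, ltW L1_gt0).
set k := L0 / L1; have k_ge0 : 0 <= k by rewrite divr_ge0.
have -> : L0 = k * L1 by rewrite mulfVK ?gt_eqF.
clearbody k.
have coef_ge0 : 0 <= (k * L1 + L1 * d) / 2 by rewrite divr_ge0 ?addr_ge0 ?mulr_ge0.
have ynu_le : (y * nu) ^+ 2 <= y ^+ 2.
  by apply: lerXn2r; rewrite ?nnegrE ?mulr_ge0 //; apply: ler_piMr.
have quad_le : (k * L1 + L1 * d) / 2 * y ^+ 2 <= y / 4 * (k + d).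
  have w_ge0 : 0 <= y / 2 * (k + d) by rewrite mulr_ge0 ?addr_ge0 ?divr_ge0.
  have yL1_half : y * L1 <= 1 / 2 by lra.
  have -> : (k * L1 + L1 * d) / 2 * y ^+ 2 = y / 2 * (k + d) * (y * L1) by ring.
  have := ler_wpM2l w_ge0 yL1_half; lra.
have := ler_wpM2l coef_ge0 ynu_le; have := ler_wpM2l y_ge0 a_ge; lra.
Qed.

Section DualNorm.
Context {R : realType} {p q : nat} {N : 'M[R]_(p, q) -> R}.
Hypothesis normN : is_norm N.

Lemma is_norm0 : N 0 = 0.
Proof. by case: normN => _ _ normZ _; rewrite -(scale0r 0) normZ normr0 mul0r. Qed.

Lemma mxinnerZr (G D : 'M[R]_(p, q)) (a : R) : mxinner G (a *: D) = a * mxinner G D.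
Proof. by rewrite /mxinner -scalemxAr mxtraceZ. Qed.

Lemma mxinner0r (G : 'M[R]_(p, q)) : mxinner G 0 = 0.
Proof. by rewrite /mxinner mulmx0 mxtrace0. Qed.

Let dual_set (G : 'M[R]_(p, q)) :=
  [set r : R | exists D : 'M[R]_(p, q), N D <= 1 /\ r = mxinner G D]%classic.

Let dual_set0 (G : 'M[R]_(p, q)) : dual_set G 0.
Proof. by exists 0; rewrite is_norm0 ler01 mxinner0r. Qed.

Lemma dual_norm_ge0 (G : 'M[R]_(p, q)) : 0 <= dual_norm N G.
Proof.
have [supG|nosupG] := pselect (has_sup (dual_set G)).
  exact: sup_upper_bound supG _ (dual_set0 G).
by rewrite /dual_norm sup_out.
Qed.

Lemma dual_norm_approx (G : 'M[R]_(p, q)) (t : R) : t < 1 ->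
  exists2 D, N D <= 1 & t * dual_norm N G <= mxinner G D.
Proof.
move=> t_lt1; have [->|dG_gt0] := eqVneq (dual_norm N G) 0.
  by exists 0; rewrite ?is_norm0 ?ler01 // mulr0 mxinner0r.
have {dG_gt0}dG_gt0 : 0 < dual_norm N G by rewrite lt_def dG_gt0 dual_norm_ge0.
have supG : has_sup (dual_set G).
  by apply: contrapT => /sup_out dG0; move: dG_gt0; rewrite /dual_norm dG0 ltxx.
have eps_gt0 : 0 < (1 - t) * dual_norm N G by rewrite mulr_gt0 // subr_gt0.
have [_ [D [ND ->]] ltD] := sup_adherent eps_gt0 supG.
by exists D => //; move: ltD; rewrite -/(dual_norm N G); nra.
Qed.

End DualNorm.

Section OneStep.
Context {R : realType} {b : nat} {m n : 'I_b -> nat}.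
Context {N : forall i : 'I_b, 'M[R]_(m i, n i) -> R}.
Context {f : blocks R m n -> R} {gradf : blocks R m n -> blocks R m n}.
Context {fstar : R} {L0 L1 : 'I_b -> R} {S : {set 'I_b}}.
Hypothesis normN : forall i, is_norm (N i).
Hypothesis f_ge : forall X, fstar <= f X.
Hypothesis L0_ge0 : forall i, 0 <= L0 i.
Hypothesis L1_gt0 : forall i, i \in S -> 0 < L1 i.
Hypothesis smoothS : forall X G : blocks R m n,
  (forall i, i \notin S -> G i = 0) ->
  f (badd X G) - f X - binner (gradf X) G <=
    \sum_(i in S) (L0 i + L1 i * dual_norm (N i) (gradf X i)) / 2 * N i (G i) ^+ 2.

Local Notation d X i := (dual_norm (N i) (gradf X i)).

Lemma descent_step_le (X V : blocks R m n) (y : 'I_b -> R) :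
  (forall i, i \in S -> 0 < y i /\ 2 * y i * L1 i <= 1) ->
  (forall i, i \in S -> N i (V i) <= 1 /\ 3/4 * d X i <= mxinner (gradf X i) (V i)) ->
  fstar - f X <= \sum_(i in S) (y i / 4 * (L0 i / L1 i) - y i / 2 * d X i).
Proof.
move=> y_ok V_ok.
pose G : blocks R m n := fun i => if i \in S then - y i *: V i else 0.
have G_out i : i \notin S -> G i = 0 by rewrite /G => /negbTE ->.
have inner_G : binner (gradf X) G = \sum_(i in S) - (y i * mxinner (gradf X i) (V i)).
  rewrite /binner [RHS]big_mkcond; apply: eq_bigr => i _; rewrite /G.
  by case: ifP => _; rewrite ?mxinner0r // mxinnerZr mulNr.
have step_le : f (badd X G) - f X <=
    \sum_(i in S) ((L0 i + L1 i * d X i) / 2 * N i (G i) ^+ 2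
                   - y i * mxinner (gradf X i) (V i)).
  by rewrite big_split /= -inner_G; have := smoothS X G G_out; lra.
apply: le_trans (_ : f (badd X G) - f X <= _); first by rewrite lerD2r f_ge.
apply: le_trans step_le _; apply: ler_sum => i iS.
have [y_gt0 yL1_le] := y_ok i iS; have [NV_le1 V_dual] := V_ok i iS.
have -> : N i (G i) = y i * N i (V i).
  by case: (normN i) => _ _ normZ _; rewrite /G iS normZ normrN gtr0_norm.
apply: block_descent_le => //; [exact: L1_gt0 | | exact: dual_norm_ge0].
by rewrite NV_le1 andbT; case: (normN i).
Qed.

Lemma sum_dual_norm_le (x : 'I_b -> R) (X : blocks R m n) :
  (forall i, i \in S -> 0 < x i) ->
  \sum_(i in S) x i * d X i
    <= 4 * (\big[Num.max/0]_(i in S) (x i * L1 i)) * (f X - fstar)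
       + \sum_(i in S) x i * L0 i / L1 i.
Proof.
move=> x_gt0; set M := \big[Num.max/0]_(i in S) _.
set A := \sum_(i in S) _; set B := \sum_(i in S) _.
have B_ge0 : 0 <= B.
  apply: sumr_ge0 => i iS.
  by rewrite divr_ge0 ?mulr_ge0 ?(ltW (x_gt0 i iS)) ?(ltW (L1_gt0 i iS)).
have gap_ge0 : 0 <= f X - fstar by rewrite subr_ge0.
have [S0|[i0 i0S]] := set_0Vmem S.
  by rewrite /A S0 big_set0 addr_ge0 // mulr_ge0 // /M S0 big_set0 mulr0.
have M_ge i : i \in S -> x i * L1 i <= M by move=> iS; apply: le_bigmax_cond.
have M_gt0 : 0 < M by apply: lt_le_trans (M_ge i0 i0S); rewrite mulr_gt0 ?x_gt0 ?L1_gt0.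
pose y i := x i / (2 * M).
have y_ok i : i \in S -> 0 < y i /\ 2 * y i * L1 i <= 1.
  move=> iS; split; first by rewrite divr_gt0 ?x_gt0 ?mulr_gt0.
  have -> : 2 * y i * L1 i = x i * L1 i / M by rewrite /y; field; rewrite gt_eqF.
  by rewrite ler_pdivrMr // mul1r M_ge.
have three_quarters_lt1 : 3/4 < 1 :> R by lra.
have approx i := dual_norm_approx (normN i) (gradf X i) _ three_quarters_lt1.
pose V : blocks R m n := fun i => s2val (cid2 (approx i)).
have V_ok i : i \in S -> N i (V i) <= 1 /\ 3/4 * d X i <= mxinner (gradf X i) (V i).
  by move=> _; rewrite /V; case: cid2.
have := descent_step_le X V y y_ok V_ok.
have -> : \sum_(i in S) (y i / 4 * (L0 i / L1 i) - y i / 2 * d X i)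
          = (B / 2 - A) / (4 * M).
  rewrite /A /B mulrBl !mulr_suml -sumrB; apply: eq_bigr => i iS.
  by rewrite /y; field; rewrite !gt_eqF ?L1_gt0.
by rewrite ler_pdivlMr ?mulr_gt0 //; lra.
Qed.

End OneStep.

Theorem lemma12 (R : realType) (b : nat) (m n : 'I_b -> nat)
  (N : forall i : 'I_b, 'M[R]_(m i, n i) -> R)
  (f : blocks R m n -> R) (gradf : blocks R m n -> blocks R m n) (fstar : R)
  (D : {set 'I_b} -> R) (L0 L1 : 'I_b -> {set 'I_b} -> R) :
  (forall i, is_norm (N i)) ->
  C1_with_gradient f gradf ->
  (forall X, fstar <= f X) ->
  is_distribution D ->
  (forall i S, 0 <= L0 i S) -> (forall i S, 0 <= L1 i S) ->
  (forall S, in_supp D S -> forall (X G : blocks R m n),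
     (forall i, i \notin S -> G i = 0) ->
     f (badd X G) - f X - binner (gradf X) G <=
       \sum_(i in S) (L0 i S + L1 i S * dual_norm (N i) (gradf X i)) / 2
                       * N i (G i) ^+ 2) ->
  forall S : {set 'I_b}, in_supp D S ->
  (forall i, i \in S -> 0 < L1 i S) ->
  forall x : 'I_b -> R, (forall i, 0 < x i) ->
  forall X : blocks R m n,
    \sum_(i in S) x i * dual_norm (N i) (gradf X i)
    <= 4 * (\big[Num.max/0]_(i in S) (x i * L1 i S)) * (f X - fstar)
       + \sum_(i in S) x i * L0 i S / L1 i S.
Proof.
move=> normN _ f_ge _ L0_ge0 _ smooth S suppS L1_gt0 x x_gt0 X.
exact: (sum_dual_norm_le normN f_ge (L0_ge0^~ S) L1_gt0 (smooth S suppS) x X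
          (fun i _ => x_gt0 i)).
Qed.
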